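(* Let $\mathbb{F}\in\{\mathbb{R},\mathbb{C}\}$, $S\in \mathsf{GL}_m(\mathbb{F})$ and $T\in \mathsf{GL}_n(\mathbb{F})$. Then $\mathcal{C}(S)\otimes\mathcal{C}(T)\subseteq \mathcal{C}(S\otimes T)$ and $\mathcal{P}(S)\otimes\mathcal{P}(T)\subseteq\mathcal{P}(S\otimes T)$.
   Context: For $x\in\mathbb{F}^n$, $D_x$ denotes the diagonal matrix whose $(i,i)$-entry is $x_i$. A matrix is written $M\ge 0$ if every entry of $M$ is a nonnegative real number. For $S\in\mathsf{GL}_n(\mathbb{F})$ (invertible $n\times n$ matrices over $\mathbb{F}$), the spectracone of $S$ is $\mathcal{C}(S)=\{x\in\mathbb{F}^n \mid S D_x S^{-1}\ge 0\}$ and the spectratope of $S$ is $\mathcal{P}(S)=\{x\in\mathcal{C}(S)\mid \|x\|_\infty=1\}$. $\otimes$ is the Kronecker product, $A\otimes B=[a_{ij}B]$ blockwise; for sets of vectors $X\subseteq\mathbb{F}^m$, $Y\subseteq\mathbb{F}^n$, $X\otimes Y:=\{x\otimes y\mid x\in X,\ y\in Y\}$. *)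

From HB Require Import structures.
From mathcomp Require Import all_boot all_order all_algebra.
From mathcomp Require Import mxtens complex.
From mathcomp Require Import reals.
Set Implicit Arguments. Unset Strict Implicit. Unset Printing Implicit Defensive.
Import Order.TTheory GRing.Theory Num.Theory.
Local Open Scope ring_scope.

(* Vectors in F^n are row vectors 'rV[F]_n; D_x is diag_mx x; the Kronecker
   product is mxtens.tensmx (A *t B), whose index (i,j) is i*n+j, matching
   A \otimes B = [a_ij B]. *)

(* M >= 0 : every entry is a nonnegative real number (in a numDomainType,
   0 <= z means z is real and nonnegative). *)
Definition nonneg_mx (F : numDomainType) (m n : nat) (M : 'M[F]_(m, n)) : Prop :=
  forall i j, 0 <= M i j.

Definition spectracone (F : numFieldType) (n : nat) (S : 'M[F]_n) : 'rV[F]_n -> Prop :=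
  fun x => nonneg_mx (S *m diag_mx x *m invmx S).

Definition normInf_eq1 (F : numDomainType) (n : nat) (x : 'rV[F]_n) : Prop :=
  (forall i, `|x 0 i| <= 1) /\ (exists i, `|x 0 i| = 1).

Definition spectratope (F : numFieldType) (n : nat) (S : 'M[F]_n) : 'rV[F]_n -> Prop :=
  fun x => spectracone S x /\ normInf_eq1 x.

Definition thm41_for (F : numFieldType) : Prop :=
  forall (m n : nat) (S : 'M[F]_m) (T : 'M[F]_n),
    S \in unitmx -> T \in unitmx ->
    (forall (x : 'rV[F]_m) (y : 'rV[F]_n),
        spectracone S x -> spectracone T y -> spectracone (S *t T) (x *t y))
    /\
    (forall (x : 'rV[F]_m) (y : 'rV[F]_n),
        spectratope S x -> spectratope T y -> spectratope (S *t T) (x *t y)).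

From HB Require Import structures.
From mathcomp Require Import all_boot all_order all_algebra.
From mathcomp Require Import mxtens complex.
From mathcomp Require Import reals.
Import Order.TTheory GRing.Theory Num.Theory.
Local Open Scope ring_scope.

(* The Kronecker product is multiplicative and sends diagonal matrices to
   diagonal matrices, so conjugating D_(x ⊗ y) by S ⊗ T gives the Kronecker
   product of S D_x S^-1 and T D_y T^-1, whose entries are products of
   nonnegative entries.  For the spectratope, |(x ⊗ y)_(i,j)| = |x_i| |y_j|,
   so the sup-norm of x ⊗ y is the product of the sup-norms. *)

Section KroneckerAlgebra.
Variable R : comUnitRingType.

Lemma tensmx11 (m n : nat) : (1%:M : 'M[R]_m) *t (1%:M : 'M[R]_n) = 1%:M.
Proof.
apply/matrixP=> i j.
case: (mxtens_indexP i)=> i1 i2; case: (mxtens_indexP j)=> j1 j2.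
rewrite tensmxE !mxE (can_eq (@mxtens_indexK m n)) xpair_eqE.
by case: (i1 == j1); case: (i2 == j2); rewrite ?mulr1 ?mulr0 ?mul0r.
Qed.

Lemma invmx_tens (m n : nat) (S : 'M[R]_m) (T : 'M[R]_n) :
  S \in unitmx -> T \in unitmx -> invmx (S *t T) = invmx S *t invmx T.
Proof.
move=> uS uT.
have STV : (S *t T) *m (invmx S *t invmx T) = 1%:M.
  by rewrite tensmx_mul !mulmxV // tensmx11.
have [uST _] := mulmx1_unit STV.
by rewrite -[invmx (S *t T)]mulmx1 -STV mulmxA mulVmx // mul1mx.
Qed.

Lemma tensmx_conj (m n : nat) (S A : 'M[R]_m) (T B : 'M[R]_n) :
    S \in unitmx -> T \in unitmx ->
  (S *t T) *m (A *t B) *m invmx (S *t T)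
    = (S *m A *m invmx S) *t (T *m B *m invmx T).
Proof. by move=> uS uT; rewrite invmx_tens // !tensmx_mul. Qed.

Lemma tensmx_rowE (m n : nat) (x : 'rV[R]_m) (y : 'rV[R]_n) i j :
  (x *t y : 'rV_(m * n)) 0 (mxtens_index (i, j)) = x 0 i * y 0 j.
Proof. by rewrite !mxE !mxtens_indexK /= !(ord1 (Ordinal _)). Qed.

Lemma diag_mx_tens (m n : nat) (x : 'rV[R]_m) (y : 'rV[R]_n) :
  diag_mx (x *t y : 'rV_(m * n)) = diag_mx x *t diag_mx y.
Proof.
apply/matrixP=> i j.
case: (mxtens_indexP i)=> i1 i2; case: (mxtens_indexP j)=> j1 j2.
rewrite tensmxE [LHS]mxE tensmx_rowE !mxE.
rewrite (can_eq (@mxtens_indexK m n)) xpair_eqE /=.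
by case: (i1 == j1); case: (i2 == j2); rewrite ?mulr1n ?mulr0n ?mulr0 ?mul0r.
Qed.

End KroneckerAlgebra.

Section KroneckerOrder.
Variable F : numDomainType.

Lemma nonneg_mx_tens (m n p q : nat) (A : 'M[F]_(m, n)) (B : 'M[F]_(p, q)) :
  nonneg_mx A -> nonneg_mx B -> nonneg_mx (A *t B).
Proof.
move=> A_ge0 B_ge0 i j.
case: (mxtens_indexP i)=> i1 i2; case: (mxtens_indexP j)=> j1 j2.
by rewrite tensmxE mulr_ge0.
Qed.

Lemma normInf_eq1_tens (m n : nat) (x : 'rV[F]_m) (y : 'rV[F]_n) :
  normInf_eq1 x -> normInf_eq1 y -> normInf_eq1 (x *t y : 'rV_(m * n)).
Proof.
move=> [x_le1 [i0 xi0]] [y_le1 [j0 yj0]]; split.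
  move=> k; case: (mxtens_indexP k)=> i j.
  by rewrite tensmx_rowE normrM -(mulr1 1) ler_pM.
by exists (mxtens_index (i0, j0)); rewrite tensmx_rowE normrM xi0 yj0 mulr1.
Qed.

End KroneckerOrder.

Section Spectra.
Variable F : numFieldType.

Lemma spectracone_tens (m n : nat) (S : 'M[F]_m) (T : 'M[F]_n) x y :
    S \in unitmx -> T \in unitmx ->
  spectracone S x -> spectracone T y -> spectracone (S *t T) (x *t y).
Proof.
move=> uS uT Sx Ty.
by rewrite /spectracone diag_mx_tens tensmx_conj //; apply: nonneg_mx_tens.
Qed.

Lemma spectratope_tens (m n : nat) (S : 'M[F]_m) (T : 'M[F]_n) x y :
    S \in unitmx -> T \in unitmx ->
  spectratope S x -> spectratope T y -> spectratope (S *t T) (x *t y).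
Proof.
move=> uS uT [Sx x1] [Ty y1].
by split; [apply: spectracone_tens | apply: normInf_eq1_tens].
Qed.

Lemma thm41_for_numField : thm41_for F.
Proof.
move=> m n S T uS uT; split=> x y.
  exact: spectracone_tens.
exact: spectratope_tens.
Qed.

End Spectra.

Theorem theorem4p1 (R : realType) :
  thm41_for R /\ thm41_for (R[i])%C.
Proof. split; exact: thm41_for_numField. Qed.
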